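(* Let $F\in\mathbb{C}[x]$ have degree $n\ge 2$ and roots $z_1,\ldots,z_n$ (with multiplicity), let $0\le k\le n$, $K\ge 1$, and let $c_1,c_2$ satisfy \[ c_2\cdot n\cdot \ln\!\Big(\frac{1+2K}{2K}\Big)\ge c_1\cdot n\ge\frac{\max(1,k)}{\ln(1+\frac{1}{8K})}. \] Let $\Delta=\Delta(m,r)$ be $(1,\,4c_2\max(1,k)n^3)$-isolating for the roots $z_1,\ldots,z_k$. Then $F^{(k)}(z)\ne0$ for all $z\in c_2n^2\cdot\Delta$, and \[ \sum_{i=k+1}^n\left|\frac{F^{(i)}(m)(c_1nr)^{i-k}k!}{F^{(k)}(m)\,i!}\right|<\frac{1}{2K}. \]
   Context: $\Delta(m,r)$ is the open disk with center $m$ and radius $r>0$; $\lambda\cdot\Delta(m,r):=\Delta(m,\lambda r)$. For $0<\rho_1\le1\le\rho_2$, a disk $\Delta$ is $(\rho_1,\rho_2)$-isolating for a set $S$ of roots (with multiplicity) if $\rho_1\cdot\Delta$ contains exactly the roots in $S$ and $\rho_2\cdot\Delta\setminus\rho_1\cdot\Delta$ contains no root of $F$. *)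

From Stdlib Require Import Reals Lra List.
Import ListNotations.
Open Scope R_scope.

Definition Cx : Type := (R * R)%type.
Definition RtoC (a : R) : Cx := (a, 0).
Definition C0 : Cx := RtoC 0.
Definition Cadd (x y : Cx) : Cx := (fst x + fst y, snd x + snd y).
Definition Copp (x : Cx) : Cx := (- fst x, - snd x).
Definition Csub (x y : Cx) : Cx := Cadd x (Copp y).
Definition Cmul (x y : Cx) : Cx :=
  (fst x * fst y - snd x * snd y, fst x * snd y + snd x * fst y).
Definition Cinv (x : Cx) : Cx :=
  (fst x / (fst x ^ 2 + snd x ^ 2), - snd x / (fst x ^ 2 + snd x ^ 2)).
Definition Cdiv (x y : Cx) : Cx := Cmul x (Cinv y).
Definition Cmod (x : Cx) : R := sqrt (fst x ^ 2 + snd x ^ 2).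

(* Polynomials in C[x]: coefficient lists, lowest degree first. *)
Definition cpoly := list Cx.

Definition peval (p : cpoly) (x : Cx) : Cx :=
  fold_right (fun a acc => Cadd a (Cmul x acc)) C0 p.

Fixpoint pderiv_aux (j : nat) (p : cpoly) : cpoly :=
  match p with
  | [] => []
  | a :: t => Cmul (RtoC (INR j)) a :: pderiv_aux (S j) t
  end.
Definition pderiv (p : cpoly) : cpoly :=
  match p with [] => [] | _ :: t => pderiv_aux 1 t end.

Definition pderivn (i : nat) (p : cpoly) : cpoly := Nat.iter i pderiv p.

Definition has_degree (p : cpoly) (n : nat) : Prop :=
  length p = S n /\ nth n p C0 <> C0.

Definition roots_with_mult (p : cpoly) (zs : list Cx) : Prop :=
  forall x : Cx,
    peval p x = Cmul (nth (pred (length p)) p C0)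
                     (fold_right (fun z acc => Cmul (Csub x z) acc) (RtoC 1) zs).

(* (rho1, rho2)-isolating disk Delta(m, r) for the set S of roots
   (S given as a predicate on indices of the root list zs):
   rho1*Delta contains exactly the roots in S (with multiplicity) and
   rho2*Delta \ rho1*Delta contains no root of F. *)
Definition isolating (zs : list Cx) (S : nat -> Prop) (m : Cx) (r rho1 rho2 : R)
  : Prop :=
  (forall i, (i < length zs)%nat ->
      (S i <-> Cmod (Csub (nth i zs C0) m) < rho1 * r)) /\
  (forall i, (i < length zs)%nat ->
      ~ (rho1 * r <= Cmod (Csub (nth i zs C0) m) < rho2 * r)).

(* sum_{i=a}^{b} f i  (empty if b < a) *)
Definition sum_range (a b : nat) (f : nat -> R) : R :=
  fold_right Rplus 0 (map f (seq a (S b - a))).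

(* Write [F (z + h) = lc(F) prod_j (h + (z - z_j))], so that [F^(i)(z) / i!] is [lc(F)] times
   the [i]-th coefficient of this product in [h].  Split the factors into the [k] near ones,
   [|z - z_j| <= r0], and the [n - k] far ones, [|z - z_j| >= R0], and let [B] be the product
   of the far [z - z_j].  Comparing coefficientwise majorants, the [k]-th coefficient is [B]
   up to a relative error [((1 + r0/t)^k - 1) ((1 + t/R0)^(n-k) - 1)] for any [t > 0], and the
   coefficients of order [i > k], weighted by [rho^i], sum to at most
   [|B| ((1 + rho/R0)^(n-k) - 1) (r0 + rho)^k].
   On [c2 n^2 Delta] isolation gives [r0 = (c2 n^2 + 1) r] and
   [R0 = (4 c2 max(1,k) n^3 - c2 n^2) r]; with [t = 2 max(1,k) r0] the error is below 1, so
   [F^(k)] does not vanish.  At the centre [r0 = r] and [R0 = 4 c2 max(1,k) n^3 r]; with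
   [rho = c1 n r] the two conditions on [c1, c2] make the weighted tail smaller than [1/(2K)]
   times the [k]-th term. *)

From Stdlib Require Import Arith Reals List Lra Lia.
From Coquelicot Require Complex.
Import ListNotations.
Open Scope R_scope.

Lemma Rdiv_nonneg a b : 0 <= a -> 0 < b -> 0 <= a / b.
Proof. intros. apply Rmult_le_pos; [|apply Rlt_le, Rinv_0_lt_compat]; auto. Qed.

Lemma Cx_ext (x y : Cx) : fst x = fst y -> snd x = snd y -> x = y.
Proof. destruct x, y; simpl; intros; subst; auto. Qed.

Ltac cx_ring := repeat match goal with x : Cx |- _ => destruct x end;
  unfold Csub, Cadd, Cmul, Copp, RtoC, C0 in *; apply Cx_ext; simpl; ring.

(* [Cx] is Coquelicot's [C] and the operations agree definitionally. *)
Lemma Cmod_mul x y : Cmod (Cmul x y) = Cmod x * Cmod y.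
Proof. exact (Complex.Cmod_mult x y). Qed.
Lemma Cmod_triangle x y : Cmod (Cadd x y) <= Cmod x + Cmod y.
Proof. exact (Complex.Cmod_triangle x y). Qed.
Lemma Cmod_ge0 x : 0 <= Cmod x.
Proof. exact (Complex.Cmod_ge_0 x). Qed.
Lemma Cmod_RtoC x : Cmod (RtoC x) = Rabs x.
Proof. exact (Complex.Cmod_R x). Qed.
Lemma Cmod_C0 : Cmod C0 = 0.
Proof. exact Complex.Cmod_0. Qed.
Lemma Cmod_opp x : Cmod (Copp x) = Cmod x.
Proof. exact (Complex.Cmod_opp x). Qed.
Lemma Cmod_eq0 x : Cmod x = 0 -> x = C0.
Proof. exact (Complex.Cmod_eq_0 x). Qed.
Lemma Cmod_inv x : x <> C0 -> Cmod (Cinv x) = / Cmod x.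
Proof. exact (Complex.Cmod_inv x). Qed.

Lemma Cmod_gt0 x : x <> C0 -> 0 < Cmod x.
Proof.
  intro Hx. destruct (Cmod_ge0 x) as [H|H]; auto.
  exfalso; apply Hx, Cmod_eq0; auto.
Qed.
Lemma Cmod_div x y : y <> C0 -> Cmod (Cdiv x y) = Cmod x / Cmod y.
Proof. intro Hy. unfold Cdiv. rewrite Cmod_mul, Cmod_inv; auto. Qed.
Lemma Cmod_sub_sym x y : Cmod (Csub x y) = Cmod (Csub y x).
Proof. replace (Csub x y) with (Copp (Csub y x)) by cx_ring. apply Cmod_opp. Qed.
Lemma Cmod_sub_ge x y : Cmod x - Cmod y <= Cmod (Csub x y).
Proof.
  pose proof (Cmod_triangle (Csub x y) y) as H.
  replace (Cadd (Csub x y) y) with x in H by cx_ring. lra.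
Qed.
Lemma Cmod_sub_le_via z x m : Cmod (Csub z x) <= Cmod (Csub z m) + Cmod (Csub x m).
Proof.
  rewrite (Cmod_sub_sym x m).
  replace (Csub z x) with (Cadd (Csub z m) (Csub m x)) by cx_ring. apply Cmod_triangle.
Qed.
Lemma Cmod_sub_ge_via z x m : Cmod (Csub x m) - Cmod (Csub z m) <= Cmod (Csub z x).
Proof.
  pose proof (Cmod_sub_le_via x m z) as H.
  rewrite (Cmod_sub_sym x z), (Cmod_sub_sym m z) in H. lra.
Qed.
Lemma Cmul_eq0_r x y : Cmul x y = C0 -> x <> C0 -> y = C0.
Proof.
  intros H Hx. apply Cmod_eq0. apply (f_equal Cmod) in H.
  rewrite Cmod_mul, Cmod_C0 in H. pose proof (Cmod_gt0 x Hx). pose proof (Cmod_ge0 y). nra.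
Qed.

Fixpoint padd (p q : cpoly) : cpoly :=
  match p, q with
  | [], _ => q
  | _, [] => p
  | a :: p', b :: q' => Cadd a b :: padd p' q'
  end.
Definition scal (c : Cx) (p : cpoly) : cpoly := map (Cmul c) p.
Fixpoint pmul (p q : cpoly) : cpoly :=
  match p with
  | [] => []
  | a :: p' => padd (scal a q) (C0 :: pmul p' q)
  end.
Definition coef (p : cpoly) (j : nat) : Cx := nth j p C0.

Lemma coef_nil j : coef [] j = C0.
Proof. destruct j; reflexivity. Qed.
Lemma coef_cons0 a p : coef (a :: p) 0 = a.
Proof. reflexivity. Qed.
Lemma coef_consS a p j : coef (a :: p) (S j) = coef p j.
Proof. reflexivity. Qed.
Lemma coef_overflow p j : (length p <= j)%nat -> coef p j = C0.
Proof. apply nth_overflow. Qed.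

Lemma coef_padd p q j : coef (padd p q) j = Cadd (coef p j) (coef q j).
Proof.
  revert q j; induction p as [|a p IH]; intros [|b q] j; simpl padd;
    rewrite ?coef_nil; try (unfold coef; cx_ring).
  destruct j; [reflexivity|]. exact (IH q j).
Qed.
Lemma coef_scal c p j : coef (scal c p) j = Cmul c (coef p j).
Proof.
  revert j; induction p as [|a p IH]; intros j.
  - rewrite !coef_nil. cx_ring.
  - destruct j; [reflexivity|]. apply IH.
Qed.

Lemma peval_cons a p x : peval (a :: p) x = Cadd a (Cmul x (peval p x)).
Proof. reflexivity. Qed.
Lemma peval_padd p q x : peval (padd p q) x = Cadd (peval p x) (peval q x).
Proof.
  revert q; induction p as [|a p IH]; intros [|b q]; simpl padd; try (simpl; cx_ring).
  rewrite !peval_cons, IH. cx_ring.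
Qed.
Lemma peval_scal c p x : peval (scal c p) x = Cmul c (peval p x).
Proof.
  induction p as [|a p IH]; [simpl; cx_ring|].
  unfold scal in *; simpl map. rewrite !peval_cons, IH. cx_ring.
Qed.
Lemma peval_pmul p q x : peval (pmul p q) x = Cmul (peval p x) (peval q x).
Proof.
  induction p as [|a p IH]; [simpl; cx_ring|].
  simpl pmul. rewrite peval_padd, peval_scal, !peval_cons, IH. cx_ring.
Qed.

Lemma peval_ext p q x : (forall j, coef p j = coef q j) -> peval p x = peval q x.
Proof.
  revert q; induction p as [|a p IH]; intros q H.
  - induction q as [|b q IHq]; [reflexivity|].
    rewrite peval_cons, <- IHq
      by (intro j; specialize (H (S j)); rewrite !coef_nil in *; exact H).
    assert (Hb : b = C0) by exact (eq_sym (H O)). rewrite Hb. simpl. cx_ring.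
  - destruct q as [|b q].
    + rewrite peval_cons, (IH [])
        by (intro j; specialize (H (S j)); rewrite !coef_nil in *; exact H).
      assert (Ha : a = C0) by exact (H O). rewrite Ha. simpl. cx_ring.
    + rewrite !peval_cons, (IH q (fun j => H (S j))).
      assert (Hab : a = b) by exact (H O). rewrite Hab. reflexivity.
Qed.

Definition aeval (p : cpoly) (t : R) : R :=
  fold_right (fun a acc => Cmod a + t * acc) 0 p.

Lemma aeval_cons a p t : aeval (a :: p) t = Cmod a + t * aeval p t.
Proof. reflexivity. Qed.
Lemma aeval_ge0 p t : 0 <= t -> 0 <= aeval p t.
Proof. intro Ht. induction p as [|a p IH]; simpl; [lra|]. pose proof (Cmod_ge0 a). nra. Qed.
Lemma Cmod_peval_le p x : Cmod (peval p x) <= aeval p (Cmod x).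
Proof.
  induction p as [|a p IH]; simpl; [rewrite Cmod_C0; lra|].
  eapply Rle_trans; [apply Cmod_triangle|]. rewrite Cmod_mul.
  pose proof (Cmod_ge0 x). apply Rplus_le_compat_l, Rmult_le_compat_l; auto.
Qed.
Lemma aeval_le s t p : 0 <= s <= t -> aeval p s <= aeval p t.
Proof.
  intro H. induction p as [|a p IH]; simpl; [lra|].
  pose proof (aeval_ge0 p s ltac:(lra)). nra.
Qed.
Lemma aeval_padd p q t : 0 <= t -> aeval (padd p q) t <= aeval p t + aeval q t.
Proof.
  intro Ht. revert q; induction p as [|a p IH]; intros [|b q]; simpl padd; simpl; try lra.
  pose proof (Cmod_triangle a b). pose proof (IH q). nra.
Qed.
Lemma aeval_scal c p t : aeval (scal c p) t = Cmod c * aeval p t.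
Proof.
  induction p as [|a p IH]; [simpl; ring|].
  unfold scal in *. simpl map. rewrite !aeval_cons, IH, Cmod_mul. ring.
Qed.
Lemma aeval_pmul p q t : 0 <= t -> aeval (pmul p q) t <= aeval p t * aeval q t.
Proof.
  intro Ht. induction p as [|a p IH]; simpl pmul; [simpl; lra|].
  eapply Rle_trans; [apply aeval_padd; auto|].
  rewrite aeval_scal, !aeval_cons, Cmod_C0.
  pose proof (aeval_ge0 q t Ht). nra.
Qed.

(* At [x = e] with [0 < e <= 1], [|a| = |e p(e)| <= e * aeval p 1], which is [< |a|] for
   [e = |a| / (aeval p 1 + |a|)]. *)
Lemma peval_eq0_head a p : (forall x, x <> C0 -> peval (a :: p) x = C0) -> a = C0.
Proof.
  intro H. destruct (Req_dec (Cmod a) 0) as [E|E]; [apply Cmod_eq0; auto|exfalso].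
  pose proof (Cmod_ge0 a) as Ha. set (M := aeval p 1).
  assert (HM : 0 <= M) by (apply aeval_ge0; lra).
  set (e := Cmod a / (M + Cmod a)).
  assert (He : 0 < e <= 1).
  { unfold e. split; [apply Rdiv_lt_0_compat; lra|].
    apply Rmult_le_reg_r with (M + Cmod a); [lra|]. field_simplify; lra. }
  assert (Hx : RtoC e <> C0) by (intro Q; injection Q; lra).
  specialize (H _ Hx). rewrite peval_cons in H.
  assert (Ea : a = Copp (Cmul (RtoC e) (peval p (RtoC e)))).
  { transitivity (Cadd (Cadd a (Cmul (RtoC e) (peval p (RtoC e))))
                       (Copp (Cmul (RtoC e) (peval p (RtoC e))))); [cx_ring|].
    rewrite H. cx_ring. }
  assert (Hle : Cmod a <= e * M).
  { rewrite Ea, Cmod_opp, Cmod_mul, Cmod_RtoC, Rabs_pos_eq by lra.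
    apply Rmult_le_compat_l; [lra|].
    eapply Rle_trans; [apply Cmod_peval_le|].
    rewrite Cmod_RtoC, Rabs_pos_eq by lra. apply aeval_le. lra. }
  assert (e * M < Cmod a); [|lra].
  unfold e. apply Rmult_lt_reg_r with (M + Cmod a); [lra|]. field_simplify; nra.
Qed.

Lemma peval_eq0_coef p : (forall x, x <> C0 -> peval p x = C0) -> forall j, coef p j = C0.
Proof.
  induction p as [|a p IH]; intros H j; [apply coef_nil|].
  assert (Ha : a = C0) by (apply peval_eq0_head with p; auto).
  destruct j as [|j]; [exact Ha|].
  apply IH. intros x Hx. apply (Cmul_eq0_r x); auto.
  rewrite <- (H x Hx), peval_cons, Ha. cx_ring.
Qed.

Lemma peval_inj_coef p q : (forall x, peval p x = peval q x) -> forall j, coef p j = coef q j.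
Proof.
  intros H j.
  assert (Z : coef (padd p (scal (Copp (RtoC 1)) q)) j = C0).
  { apply peval_eq0_coef. intros x _. rewrite peval_padd, peval_scal, H. cx_ring. }
  rewrite coef_padd, coef_scal in Z.
  transitivity (Cadd (Cadd (coef p j) (Cmul (Copp (RtoC 1)) (coef q j))) (coef q j)); [cx_ring|].
  rewrite Z. cx_ring.
Qed.

Lemma coef_pderiv_aux s p j :
  coef (pderiv_aux s p) j = Cmul (RtoC (INR (s + j))) (coef p j).
Proof.
  revert s j; induction p as [|a p IH]; intros s j.
  - rewrite !coef_nil. cx_ring.
  - destruct j as [|j]; simpl pderiv_aux.
    + rewrite Nat.add_0_r. reflexivity.
    + rewrite !coef_consS, IH, Nat.add_succ_r. reflexivity.
Qed.
Lemma coef_pderiv p j : coef (pderiv p) j = Cmul (RtoC (INR (S j))) (coef p (S j)).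
Proof.
  destruct p as [|a p]; [rewrite !coef_nil; cx_ring|].
  exact (coef_pderiv_aux 1 p j).
Qed.
Lemma length_pderiv p : length (pderiv p) = pred (length p).
Proof.
  destruct p as [|a p]; [reflexivity|]. simpl. generalize 1%nat.
  induction p; intro s; simpl; auto.
Qed.
Lemma length_pderivn i p : length (pderivn i p) = (length p - i)%nat.
Proof.
  induction i as [|i IH]; [simpl; lia|].
  change (length (pderiv (pderivn i p)) = (length p - S i)%nat).
  rewrite length_pderiv, IH. lia.
Qed.
Lemma pderivn_short i p : (length p <= i)%nat -> pderivn i p = [].
Proof. intro H. apply length_zero_iff_nil. rewrite length_pderivn. lia. Qed.

(* [C0 :: p] is [X * p]: this is the Leibniz rule for [(X p)^(i+1)]. *)
Lemma coef_pderivn_mulX i p j :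
  coef (pderivn (S i) (C0 :: p)) j =
  Cadd (coef (C0 :: pderivn (S i) p) j) (Cmul (RtoC (INR (S i))) (coef (pderivn i p) j)).
Proof.
  change (pderivn (S ?i) ?q) with (pderiv (pderivn i q)).
  revert j; induction i as [|i IH]; intro j.
  - simpl pderivn. rewrite coef_pderiv.
    destruct j as [|j]; rewrite ?coef_consS, ?coef_cons0, ?coef_pderiv.
    + simpl INR. cx_ring.
    + rewrite !S_INR. simpl INR. cx_ring.
  - change (pderivn (S i) ?q) with (pderiv (pderivn i q)) in IH.
    rewrite coef_pderiv. change (pderivn (S i) ?q) with (pderiv (pderivn i q)).
    rewrite IH. destruct j as [|j]; rewrite ?coef_consS, ?coef_cons0, !coef_pderiv, !S_INR; cx_ring.
Qed.

Lemma peval_pderivn_cons a p i z :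
  peval (pderivn (S i) (a :: p)) z =
  Cadd (Cmul z (peval (pderivn (S i) p) z)) (Cmul (RtoC (INR (S i))) (peval (pderivn i p) z)).
Proof.
  assert (E : pderivn (S i) (a :: p) = pderivn (S i) (C0 :: p))
    by (unfold pderivn; rewrite !Nat.iter_succ_r; reflexivity).
  rewrite E, (peval_ext _ (padd (C0 :: pderivn (S i) p) (scal (RtoC (INR (S i))) (pderivn i p)))).
  - rewrite peval_padd, peval_cons, peval_scal. cx_ring.
  - intro j. rewrite coef_pderivn_mulX, coef_padd, coef_scal. reflexivity.
Qed.

Definition taylor_coef (i : nat) (p : cpoly) (z : Cx) : Cx :=
  Cmul (peval (pderivn i p) z) (RtoC (/ INR (fact i))).

Lemma taylor_coef_short i p z : (length p <= i)%nat -> taylor_coef i p z = C0.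
Proof. intro H. unfold taylor_coef. rewrite pderivn_short by auto. simpl. cx_ring. Qed.

Lemma taylor_coef_cons a p z i :
  taylor_coef (S i) (a :: p) z = Cadd (Cmul z (taylor_coef (S i) p z)) (taylor_coef i p z).
Proof.
  unfold taylor_coef. rewrite peval_pderivn_cons.
  assert (E : / INR (fact i) = INR (S i) * / INR (fact (S i))).
  { rewrite fact_simpl, mult_INR. field.
    split; apply not_0_INR; [apply fact_neq_0|lia]. }
  rewrite E. cx_ring.
Qed.

Lemma taylor_coef_0 p z : taylor_coef 0 p z = peval p z.
Proof. unfold taylor_coef. simpl. rewrite Rinv_1. cx_ring. Qed.

Definition taylor (p : cpoly) (z : Cx) (L : nat) : cpoly :=
  map (fun i => taylor_coef i p z) (seq 0 L).

Lemma coef_taylor p z L j :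
  coef (taylor p z L) j = if Nat.ltb j L then taylor_coef j p z else C0.
Proof.
  unfold taylor, coef. destruct (Nat.ltb_spec j L).
  - rewrite nth_indep with (d' := taylor_coef 0 p z) by (rewrite length_map, length_seq; auto).
    rewrite (map_nth (fun i => taylor_coef i p z)), seq_nth; auto.
  - apply nth_overflow. rewrite length_map, length_seq; auto.
Qed.

Lemma peval_taylor p z h L :
  (length p <= L)%nat -> peval p (Cadd z h) = peval (taylor p z L) h.
Proof.
  revert L; induction p as [|a p IH]; intros L HL.
  - transitivity (peval [] h); [reflexivity|]. apply peval_ext.
    intro j. rewrite coef_taylor, coef_nil.
    destruct (Nat.ltb j L); auto. symmetry. apply taylor_coef_short. simpl; lia.
  - destruct L as [|L]; [simpl in HL; lia|]. simpl in HL.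
    rewrite (peval_ext (taylor (a :: p) z (S L))
               (padd (padd [a] (scal z (taylor p z L))) (C0 :: taylor p z L))).
    + rewrite !peval_padd, peval_scal, !peval_cons, <- (IH L) by lia. simpl. cx_ring.
    + intro j. rewrite !coef_padd, coef_scal, !coef_taylor.
      destruct j as [|j].
      * simpl Nat.ltb. rewrite taylor_coef_0, peval_cons, coef_cons0.
        destruct (Nat.ltb_spec 0 L).
        -- rewrite taylor_coef_0. cx_ring.
        -- replace p with (@nil Cx) by (symmetry; apply length_zero_iff_nil; lia).
           simpl. cx_ring.
      * rewrite !coef_consS, !coef_taylor, coef_nil.
        destruct (Nat.ltb_spec (S j) (S L)), (Nat.ltb_spec j L); try lia.
        -- rewrite taylor_coef_cons.
           destruct (Nat.ltb_spec (S j) L); [cx_ring|].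
           rewrite (taylor_coef_short (S j) p) by lia. cx_ring.
        -- destruct (Nat.ltb_spec (S j) L); [lia|]. cx_ring.
Qed.

Definition linprod (l : list Cx) : cpoly :=
  fold_right (fun a acc => pmul [a; RtoC 1] acc) [RtoC 1] l.

Definition prod_shift (l : list Cx) (h : Cx) : Cx :=
  fold_right (fun a acc => Cmul (Cadd a h) acc) (RtoC 1) l.

Lemma peval_linprod l h : peval (linprod l) h = prod_shift l h.
Proof.
  induction l as [|a l IH]; [simpl; cx_ring|].
  change (linprod (a :: l)) with (pmul [a; RtoC 1] (linprod l)).
  rewrite peval_pmul, IH. simpl. cx_ring.
Qed.

Lemma prod_shift_app l1 l2 h :
  prod_shift (l1 ++ l2) h = Cmul (prod_shift l1 h) (prod_shift l2 h).
Proof. induction l1 as [|a l1 IH]; simpl; [cx_ring|]. rewrite IH. cx_ring. Qed.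

Lemma linprod_app l1 l2 j :
  coef (linprod (l1 ++ l2)) j = coef (pmul (linprod l2) (linprod l1)) j.
Proof.
  apply peval_inj_coef. intro x.
  rewrite peval_pmul, !peval_linprod, prod_shift_app. cx_ring.
Qed.

Lemma length_padd p q : length (padd p q) = Nat.max (length p) (length q).
Proof.
  revert q; induction p as [|a p IH]; intros [|b q]; simpl; auto.
Qed.

Lemma length_linprod l : length (linprod l) = S (length l).
Proof.
  induction l as [|a l IH]; [reflexivity|].
  change (linprod (a :: l)) with (pmul [a; RtoC 1] (linprod l)). simpl pmul. unfold scal.
  rewrite !length_padd, !length_map. simpl. rewrite length_padd, length_map, IH. simpl. lia.
Qed.

Lemma linprod_monic l : coef (linprod l) (length l) = RtoC 1.
Proof.
  induction l as [|a l IH]; [reflexivity|]. simpl length.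
  change (linprod (a :: l)) with (pmul [a; RtoC 1] (linprod l)). simpl pmul.
  rewrite coef_padd, coef_scal, coef_consS, coef_padd, coef_scal, IH.
  rewrite coef_overflow by (rewrite length_linprod; lia).
  replace (coef [C0] (length l)) with C0 by (destruct (length l) as [|[|]]; reflexivity).
  cx_ring.
Qed.

Definition pabs (l : list Cx) (t : R) : R := fold_right (fun a acc => (Cmod a + t) * acc) 1 l.

Lemma pabs_ge0 l t : 0 <= t -> 0 <= pabs l t.
Proof. intro. induction l as [|a l IH]; simpl; [lra|]. pose proof (Cmod_ge0 a). nra. Qed.

Lemma aeval_linprod l t : 0 <= t -> aeval (linprod l) t <= pabs l t.
Proof.
  intro Ht. induction l as [|a l IH].
  - simpl. rewrite Cmod_RtoC, Rabs_R1. lra.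
  - change (linprod (a :: l)) with (pmul [a; RtoC 1] (linprod l)).
    eapply Rle_trans; [apply aeval_pmul; auto|].
    simpl pabs. rewrite !aeval_cons, Cmod_RtoC, Rabs_R1.
    pose proof (aeval_ge0 (linprod l) t Ht). pose proof (Cmod_ge0 a).
    apply Rmult_le_compat; simpl; nra.
Qed.

Lemma Cmod_coef0_linprod l : Cmod (coef (linprod l) 0) = pabs l 0.
Proof.
  replace (coef (linprod l) 0) with (peval (linprod l) C0)
    by (destruct (linprod l); simpl; [reflexivity|cx_ring]).
  rewrite peval_linprod. induction l as [|a l IH]; simpl.
  - rewrite Cmod_RtoC, Rabs_R1. reflexivity.
  - rewrite Cmod_mul, IH. replace (Cadd a C0) with a by cx_ring. ring.
Qed.

Lemma pabs_le_near l r0 t : 0 <= t -> (forall x, In x l -> Cmod x <= r0) ->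
  pabs l t <= (r0 + t) ^ length l.
Proof.
  intros Ht H. induction l as [|a l IH]; simpl; [lra|].
  assert (Ha := H a (or_introl eq_refl)).
  assert (IH' : pabs l t <= (r0 + t) ^ length l) by (apply IH; intros; apply H; right; auto).
  pose proof (pabs_ge0 l t Ht). pose proof (Cmod_ge0 a).
  apply Rmult_le_compat; nra.
Qed.

Lemma pabs_le_far l R0 t : 0 < R0 -> 0 <= t -> (forall x, In x l -> R0 <= Cmod x) ->
  pabs l t <= pabs l 0 * (1 + t / R0) ^ length l.
Proof.
  intros HR Ht H. induction l as [|a l IH]; simpl; [lra|].
  assert (Ha := H a (or_introl eq_refl)).
  assert (IH' : pabs l t <= pabs l 0 * (1 + t / R0) ^ length l)
    by (apply IH; intros; apply H; right; auto).
  pose proof (pabs_ge0 l t Ht).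
  assert (Hfactor : Cmod a + t <= (Cmod a + 0) * (1 + t / R0)).
  { assert (t <= Cmod a * (t / R0)); [|lra].
    replace t with (R0 * (t / R0)) at 1 by (field; lra).
    apply Rmult_le_compat_r; [apply Rdiv_nonneg|]; lra. }
  replace ((Cmod a + 0) * pabs l 0 * ((1 + t / R0) * (1 + t / R0) ^ length l))
    with (((Cmod a + 0) * (1 + t / R0)) * (pabs l 0 * (1 + t / R0) ^ length l)) by ring.
  apply Rmult_le_compat; auto. pose proof (Cmod_ge0 a). lra.
Qed.

Lemma pabs_far_gt0 l R0 : 0 < R0 -> (forall x, In x l -> R0 <= Cmod x) -> 0 < pabs l 0.
Proof.
  intros HR H. induction l as [|a l IH]; simpl; [lra|].
  assert (Ha := H a (or_introl eq_refl)).
  assert (0 < pabs l 0) by (apply IH; intros; apply H; right; auto). nra.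
Qed.

Definition rsum (l : list nat) (f : nat -> R) : R := fold_right Rplus 0 (map f l).

Lemma rsum_scale l f c : rsum l (fun i => c * f i) = c * rsum l f.
Proof. induction l as [|i l IH]; unfold rsum in *; simpl; [ring|]. rewrite IH. ring. Qed.
Lemma rsum_ext l f g : (forall i, In i l -> f i = g i) -> rsum l f = rsum l g.
Proof.
  induction l as [|i l IH]; intros H; unfold rsum; simpl; [lra|].
  rewrite H by (left; auto). f_equal. apply IH. intros; apply H; right; auto.
Qed.

Lemma rsum_coef_le_aeval p t s c : 0 <= t ->
  rsum (seq s c) (fun i => Cmod (coef p i) * t ^ i) <= aeval p t.
Proof.
  intro Ht. revert s c; induction p as [|a p IH]; intros s c.
  - rewrite (rsum_ext _ _ (fun _ => 0 * 0)) by (intros; rewrite coef_nil, Cmod_C0; ring).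
    rewrite rsum_scale. simpl. lra.
  - rewrite aeval_cons. pose proof (Cmod_ge0 a). pose proof (aeval_ge0 p t Ht).
    assert (Htail : forall s' c', rsum (seq (S s') c') (fun i => Cmod (coef (a :: p) i) * t ^ i)
                                  <= t * aeval p t).
    { intros s' c'. unfold rsum. rewrite <- seq_shift, map_map. fold (rsum (seq s' c')
        (fun i => Cmod (coef (a :: p) (S i)) * t ^ S i)).
      rewrite (rsum_ext _ _ (fun i => t * (Cmod (coef p i) * t ^ i)))
        by (intros; rewrite coef_consS; simpl; ring).
      rewrite rsum_scale. apply Rmult_le_compat_l; auto. }
    destruct s as [|s]; [destruct c as [|c]|].
    + unfold rsum; simpl. nra.
    + change (seq 0 (S c)) with (0%nat :: seq 1 c).
      change (rsum (0%nat :: ?l) ?f) with (f 0%nat + rsum l f).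
      specialize (Htail O c). cbv beta. rewrite coef_cons0. simpl pow. lra.
    + specialize (Htail s c). nra.
Qed.

Lemma Cmod_coef_le_aeval p t j : 0 <= t -> Cmod (coef p j) * t ^ j <= aeval p t.
Proof.
  intro Ht. pose proof (rsum_coef_le_aeval p t j 1 Ht) as H. unfold rsum in H. simpl in H. lra.
Qed.

Lemma coef_firstn q d j : (j < d)%nat -> coef (firstn d q) j = coef q j.
Proof.
  revert d j; induction q as [|a q IH]; intros d j H.
  - rewrite firstn_nil. reflexivity.
  - destruct d as [|d]; [lia|]. destruct j as [|j]; [reflexivity|].
    apply IH. lia.
Qed.
Lemma coef_pmul_firstn p q d j : (j < d)%nat -> coef (pmul p q) j = coef (pmul p (firstn d q)) j.
Proof.
  revert j; induction p as [|a p IH]; intros j H; [reflexivity|].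
  simpl pmul. rewrite !coef_padd, !coef_scal, coef_firstn by auto.
  destruct j as [|j]; [reflexivity|]. rewrite !coef_consS, IH by lia. reflexivity.
Qed.
Lemma aeval_firstn q d t : length q = S d ->
  aeval q t = aeval (firstn d q) t + Cmod (coef q d) * t ^ d.
Proof.
  revert q; induction d as [|d IH]; intros q Hq.
  - destruct q as [|a [|b q]]; simpl in Hq; try lia. rewrite coef_cons0. simpl. ring.
  - destruct q as [|a q]; simpl in Hq; [lia|]. simpl firstn. rewrite !aeval_cons, (IH q) by lia.
    rewrite coef_consS. simpl. ring.
Qed.

Definition excess (a : R) (N : nat) : R := (1 + a) ^ N - 1.

Lemma excess_ge0 a N : 0 <= a -> 0 <= excess a N.
Proof. intro Ha. unfold excess. pose proof (pow_R1_Rle (1 + a) N ltac:(lra)). lra. Qed.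

Section NearFar.

Variables (u w : list Cx) (r0 R0 : R).
Hypotheses (HR0 : 0 < R0)
  (Hnear : forall x, In x u -> Cmod x <= r0)
  (Hfar : forall x, In x w -> R0 <= Cmod x).

Lemma linprod_far_decomp t : 0 < t ->
  exists B Q, linprod w = B :: Q /\ Cmod B = pabs w 0 /\
    t * aeval Q t <= pabs w 0 * excess (t / R0) (length w).
Proof.
  intro Ht. destruct (linprod w) as [|B Q] eqn:E.
  { apply (f_equal (@length Cx)) in E. rewrite length_linprod in E. discriminate. }
  exists B, Q. split; [reflexivity|].
  assert (HB : Cmod B = pabs w 0) by (rewrite <- Cmod_coef0_linprod, E; reflexivity).
  split; auto.
  pose proof (aeval_linprod w t (Rlt_le _ _ Ht)) as H. rewrite E, aeval_cons, HB in H.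
  pose proof (pabs_le_far w R0 t HR0 (Rlt_le _ _ Ht) Hfar). unfold excess. lra.
Qed.

Lemma aeval_linprod_low t : 0 < t ->
  aeval (firstn (length u) (linprod u)) t <= t ^ length u * excess (r0 / t) (length u).
Proof.
  intro Ht.
  pose proof (aeval_firstn (linprod u) (length u) t (length_linprod u)) as E.
  rewrite linprod_monic, Cmod_RtoC, Rabs_R1 in E.
  pose proof (aeval_linprod u t (Rlt_le _ _ Ht)).
  pose proof (pabs_le_near u r0 t (Rlt_le _ _ Ht) Hnear).
  replace (r0 + t) with (t * (1 + r0 / t)) in * by (field; lra).
  rewrite Rpow_mult_distr in *. unfold excess. lra.
Qed.

(* With [linprod w = B + X Q], the [|u|]-th coefficient of the product is [B] plus the
   [(|u| - 1)]-th coefficient of [Q * linprod u], which only sees the lower part of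
   [linprod u]; the free parameter [t] weighs the majorants of the two factors. *)
Lemma coef_mid_sub_le t : 0 < t ->
  Cmod (Csub (coef (pmul (linprod w) (linprod u)) (length u)) (coef (linprod w) 0))
  <= pabs w 0 * excess (r0 / t) (length u) * excess (t / R0) (length w).
Proof.
  intro Ht. destruct (linprod_far_decomp t Ht) as (B & Q & E & HB & HQ). rewrite E.
  set (k := length u) in *. set (U := linprod u).
  simpl pmul. rewrite coef_padd, coef_scal, coef_cons0. unfold U. rewrite linprod_monic.
  set (D := coef (C0 :: pmul Q (firstn k U)) k).
  replace (coef (C0 :: pmul Q (linprod u)) k) with D.
  2: { unfold D. destruct k as [|k']; [reflexivity|].
       exact (eq_sym (coef_pmul_firstn Q U (S k') k' (Nat.lt_succ_diag_r k'))). }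
  replace (Csub (Cadd (Cmul B (RtoC 1)) D) B) with D by cx_ring.
  assert (HD : Cmod D * t ^ k <= t * aeval Q t * aeval (firstn k U) t).
  { eapply Rle_trans; [apply Cmod_coef_le_aeval; lra|].
    rewrite aeval_cons, Cmod_C0, Rplus_0_l, Rmult_assoc.
    apply Rmult_le_compat_l; [lra|]. apply aeval_pmul; lra. }
  pose proof (aeval_linprod_low t Ht) as Hlow. fold k U in Hlow.
  pose proof (aeval_ge0 Q t (Rlt_le _ _ Ht)).
  pose proof (aeval_ge0 (firstn k U) t (Rlt_le _ _ Ht)).
  assert (Htk : 0 < t ^ k) by (apply pow_lt; lra).
  apply Rmult_le_reg_r with (t ^ k); [lra|].
  eapply Rle_trans; [exact HD|].
  replace (pabs w 0 * excess (r0 / t) k * excess (t / R0) (length w) * t ^ k)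
    with (pabs w 0 * excess (t / R0) (length w) * (t ^ k * excess (r0 / t) k)) by ring.
  apply Rmult_le_compat; nra.
Qed.

Lemma Cmod_coef_mid_ge t : 0 < t ->
  pabs w 0 * (1 - excess (r0 / t) (length u) * excess (t / R0) (length w))
  <= Cmod (coef (pmul (linprod w) (linprod u)) (length u)).
Proof.
  intro Ht. pose proof (coef_mid_sub_le t Ht) as H.
  pose proof (Cmod_sub_ge (coef (linprod w) 0) (coef (pmul (linprod w) (linprod u)) (length u))).
  rewrite (Cmod_sub_sym (coef (linprod w) 0)), Cmod_coef0_linprod in *. lra.
Qed.

Lemma rsum_coef_high_le rho M : 0 < rho ->
  rsum (seq (S (length u)) M) (fun i => Cmod (coef (pmul (linprod w) (linprod u)) i) * rho ^ i)
  <= pabs w 0 * excess (rho / R0) (length w) * (r0 + rho) ^ length u.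
Proof.
  intro Hrho. destruct (linprod_far_decomp rho Hrho) as (B & Q & E & HB & HQ). rewrite E.
  simpl pmul.
  rewrite (rsum_ext _ _ (fun i => Cmod (coef (C0 :: pmul Q (linprod u)) i) * rho ^ i)).
  - eapply Rle_trans; [apply rsum_coef_le_aeval; lra|].
    rewrite aeval_cons, Cmod_C0, Rplus_0_l.
    pose proof (aeval_pmul Q (linprod u) rho (Rlt_le _ _ Hrho)).
    pose proof (aeval_linprod u rho (Rlt_le _ _ Hrho)).
    pose proof (pabs_le_near u r0 rho (Rlt_le _ _ Hrho) Hnear).
    pose proof (aeval_ge0 Q rho (Rlt_le _ _ Hrho)).
    pose proof (aeval_ge0 (linprod u) rho (Rlt_le _ _ Hrho)).
    apply Rle_trans with (rho * aeval Q rho * aeval (linprod u) rho); [nra|].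
    apply Rmult_le_compat; nra.
  - intros i Hi. apply in_seq in Hi. rewrite coef_padd, coef_scal.
    rewrite (coef_overflow (linprod u)) by (rewrite length_linprod; lia).
    do 2 f_equal. cx_ring.
Qed.

End NearFar.

Lemma prod_shift_map_Csub z h l :
  fold_right (fun x acc => Cmul (Csub (Cadd z h) x) acc) (RtoC 1) l = prod_shift (map (Csub z) l) h.
Proof.
  induction l as [|x l IH]; [reflexivity|]. simpl. rewrite IH.
  replace (Csub (Cadd z h) x) with (Cadd (Csub z x) h) by cx_ring. reflexivity.
Qed.

Lemma In_map_Csub (P : R -> Prop) z l :
  (forall x, In x l -> P (Cmod (Csub z x))) -> forall y, In y (map (Csub z) l) -> P (Cmod y).
Proof. intros H y Hy. apply in_map_iff in Hy. destruct Hy as (x & <- & Hx). auto. Qed.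

Lemma Cmod_ratio_cancel (c ci ck : Cx) (fi fk s : R) :
  c <> C0 -> ck <> C0 -> 0 < fi -> 0 < fk -> 0 <= s ->
  Cmod (Cdiv (Cmul (Cmul (Cmul (RtoC fi) (Cmul c ci)) (RtoC s)) (RtoC fk))
             (Cmul (Cmul (RtoC fk) (Cmul c ck)) (RtoC fi))) = Cmod ci * s / Cmod ck.
Proof.
  intros Hc Hck Hfi Hfk Hs. pose proof (Cmod_gt0 c Hc). pose proof (Cmod_gt0 ck Hck).
  rewrite Cmod_div.
  - rewrite !Cmod_mul, !Cmod_RtoC, !Rabs_pos_eq by lra. field. lra.
  - intro E. apply (f_equal Cmod) in E.
    rewrite !Cmod_mul, !Cmod_RtoC, !Rabs_pos_eq, Cmod_C0 in E by lra.
    assert (0 < fk * (Cmod c * Cmod ck) * fi) by (repeat apply Rmult_lt_0_compat; lra). lra.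
Qed.

Section Roots.

Variables (F : cpoly) (n : nat) (zs : list Cx).
Hypotheses (HF : length F = S n) (Hroots : roots_with_mult F zs).

(* Taylor's formula at [z] against [F (z + h) = lc(F) prod_j (h + (z - z_j))]. *)
Lemma pderivn_eq_coef_linprod z i : (i <= n)%nat ->
  peval (pderivn i F) z =
  Cmul (RtoC (INR (fact i))) (Cmul (nth n F C0) (coef (linprod (map (Csub z) zs)) i)).
Proof.
  intro Hi.
  assert (Hcoef : coef (taylor F z (S n)) i =
                  coef (scal (nth n F C0) (linprod (map (Csub z) zs))) i).
  { apply peval_inj_coef. intro h.
    rewrite <- peval_taylor by lia. rewrite Hroots, HF, peval_scal, peval_linprod.
    f_equal. apply prod_shift_map_Csub. }
  rewrite coef_taylor, coef_scal in Hcoef.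
  destruct (Nat.ltb_spec i (S n)); [|lia].
  rewrite <- Hcoef. unfold taylor_coef.
  assert (INR (fact i) <> 0) by apply INR_fact_neq_0.
  destruct (peval (pderivn i F) z). unfold Cmul, RtoC. apply Cx_ext; simpl; field; auto.
Qed.

Variable k : nat.
Hypotheses (Hlead : nth n F C0 <> C0) (Hzs : length zs = n) (Hk : (k <= n)%nat).

Section AtPoint.

Variables (z : Cx) (r0 R0 t : R).
Hypotheses (HR0 : 0 < R0) (Ht : 0 < t)
  (Hnear : forall x, In x (firstn k zs) -> Cmod (Csub z x) <= r0)
  (Hfar : forall x, In x (skipn k zs) -> R0 <= Cmod (Csub z x)).

Local Notation near := (map (Csub z) (firstn k zs)).
Local Notation far := (map (Csub z) (skipn k zs)).
Local Notation P := (pmul (linprod far) (linprod near)).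
Local Notation eps := (excess (r0 / t) k * excess (t / R0) (n - k)).

Lemma pderivn_eq_coef_split i : (i <= n)%nat ->
  peval (pderivn i F) z = Cmul (RtoC (INR (fact i))) (Cmul (nth n F C0) (coef P i)).
Proof.
  intro Hi. rewrite pderivn_eq_coef_linprod by auto.
  rewrite <- linprod_app, <- map_app, firstn_skipn. reflexivity.
Qed.

Lemma Cmod_coef_k_ge : pabs far 0 * (1 - eps) <= Cmod (coef P k).
Proof.
  pose proof (Cmod_coef_mid_ge near far r0 R0 HR0 (In_map_Csub (fun d => d <= r0) z _ Hnear)
                (In_map_Csub (fun d => R0 <= d) z _ Hfar) t Ht) as H.
  rewrite length_map, length_firstn, length_map, length_skipn in H.
  replace (Nat.min k (length zs)) with k in H by lia. rewrite Hzs in H. exact H.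
Qed.

Lemma pabs_far_pos : 0 < pabs far 0.
Proof. exact (pabs_far_gt0 _ R0 HR0 (In_map_Csub (fun d => R0 <= d) z _ Hfar)). Qed.

Lemma pderivn_neq0 : eps < 1 -> peval (pderivn k F) z <> C0.
Proof.
  intros Heps E. rewrite pderivn_eq_coef_split in E by auto.
  pose proof Cmod_coef_k_ge as Hge. pose proof pabs_far_pos.
  apply Cmul_eq0_r in E; [|intro Q; injection Q; apply INR_fact_neq_0].
  apply Cmul_eq0_r in E; auto.
  rewrite E, Cmod_C0 in Hge. nra.
Qed.

Local Notation taylor_ratio rho i :=
  (Cmod (Cdiv (Cmul (Cmul (peval (pderivn i F) z) (RtoC (rho ^ (i - k)))) (RtoC (INR (fact k))))
              (Cmul (peval (pderivn k F) z) (RtoC (INR (fact i)))))).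

Lemma taylor_ratio_eq rho i : 0 < rho -> (k <= i <= n)%nat -> coef P k <> C0 ->
  taylor_ratio rho i = Cmod (coef P i) * rho ^ i / (rho ^ k * Cmod (coef P k)).
Proof.
  intros Hrho Hi Hck. pose proof (Cmod_gt0 _ Hck).
  rewrite !pderivn_eq_coef_split by lia.
  rewrite Cmod_ratio_cancel; auto; try apply lt_0_INR, lt_O_fact; [|apply pow_le; lra].
  replace (rho ^ i) with (rho ^ (i - k) * rho ^ k) by (rewrite <- pow_add; f_equal; lia).
  field. split; [lra|]. apply pow_nonzero. lra.
Qed.

Lemma taylor_tail_le rho : 0 <= r0 -> 0 < rho -> eps < 1 ->
  sum_range (S k) n (fun i => taylor_ratio rho i)
  <= excess (rho / R0) (n - k) * (1 + r0 / rho) ^ k / (1 - eps).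
Proof.
  intros Hr0 Hrho Heps.
  pose proof Cmod_coef_k_ge as Hk_ge. pose proof pabs_far_pos as HB.
  assert (HPk : 0 < Cmod (coef P k)) by nra.
  assert (Hck : coef P k <> C0) by (intro E; rewrite E, Cmod_C0 in HPk; lra).
  assert (Hrk : 0 < rho ^ k) by (apply pow_lt; lra).
  change (sum_range (S k) n ?f) with (rsum (seq (S k) (S n - S k)) f).
  rewrite (rsum_ext _ _ (fun i => / (rho ^ k * Cmod (coef P k)) * (Cmod (coef P i) * rho ^ i)))
    by (intros i Hi; apply in_seq in Hi; rewrite taylor_ratio_eq by (auto; lia);
        unfold Rdiv; ring).
  rewrite rsum_scale.
  pose proof (rsum_coef_high_le near far r0 R0 HR0 (In_map_Csub (fun d => d <= r0) z _ Hnear)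
                (In_map_Csub (fun d => R0 <= d) z _ Hfar) rho (S n - S k) Hrho) as Htail.
  rewrite length_map, length_firstn, length_map, length_skipn, Hzs in Htail.
  replace (Nat.min k n) with k in Htail by lia.
  replace (r0 + rho) with (rho * (1 + r0 / rho)) in Htail by (field; lra).
  rewrite Rpow_mult_distr in Htail.
  set (T := rsum _ _) in *. set (G := (1 + r0 / rho) ^ k) in *.
  set (D := excess (rho / R0) (n - k)) in *.
  assert (HG : 0 <= G) by (apply pow_le; pose proof (Rdiv_nonneg r0 rho Hr0 Hrho); lra).
  assert (HD : 0 <= D) by (apply excess_ge0, Rdiv_nonneg; lra).
  apply Rmult_le_reg_r with (rho ^ k * Cmod (coef P k) * (1 - eps)).
  { repeat apply Rmult_lt_0_compat; lra. }
  replace (/ (rho ^ k * Cmod (coef P k)) * T * (rho ^ k * Cmod (coef P k) * (1 - eps)))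
    with (T * (1 - eps)) by (field; lra).
  replace (D * G / (1 - eps) * (rho ^ k * Cmod (coef P k) * (1 - eps)))
    with (D * G * rho ^ k * Cmod (coef P k)) by (field; lra).
  apply Rle_trans with (D * G * rho ^ k * (pabs far 0 * (1 - eps))).
  - replace (D * G * rho ^ k * (pabs far 0 * (1 - eps)))
      with (pabs far 0 * D * (rho ^ k * G) * (1 - eps)) by ring.
    apply Rmult_le_compat_r; lra.
  - apply Rmult_le_compat_l; auto. apply Rmult_le_pos; [apply Rmult_le_pos|]; lra.
Qed.

End AtPoint.
End Roots.

Lemma pow_1plus_le_quad (N : nat) a : 0 <= a -> INR N * a <= 1 ->
  (1 + a) ^ N <= 1 + INR N * a + (INR N * a) ^ 2.
Proof.
  intro Ha. induction N as [|N IH]; intro HN; [simpl; lra|].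
  rewrite S_INR in *. pose proof (pos_INR N).
  assert (HN' : INR N * a <= 1) by nra. specialize (IH HN'). simpl pow in *.
  apply Rle_trans with ((1 + a) * (1 + INR N * a + INR N * a * (INR N * a * 1)));
    [apply Rmult_le_compat_l; lra|].
  assert (INR N * INR N * a <= INR N + 1)
    by (assert (INR N * (INR N * a) <= INR N * 1) by (apply Rmult_le_compat_l; lra); nra).
  assert (a * a * (INR N * INR N * a) <= a * a * (INR N + 1)) by (apply Rmult_le_compat_l; nra).
  nra.
Qed.

Lemma excess_le (N : nat) a x : 0 <= a -> INR N * a <= x -> x <= 1 ->
  0 <= excess a N <= x * (1 + x).
Proof.
  intros Ha HNa Hx. split; [apply excess_ge0; auto|].
  pose proof (pow_1plus_le_quad N a Ha ltac:(lra)).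
  assert (0 <= INR N * a) by (apply Rmult_le_pos; [apply pos_INR|lra]).
  unfold excess. simpl in *. nra.
Qed.

Lemma ln_1plus_le x : 0 < x -> 0 < ln (1 + x) <= x.
Proof.
  intro Hx. split.
  - rewrite <- ln_1. apply ln_increasing; lra.
  - destruct (Rle_lt_dec (ln (1 + x)) x) as [H|H]; auto.
    apply exp_increasing in H. rewrite exp_ln in H by lra.
    pose proof (exp_ineq1_le x). lra.
Qed.

Lemma c1_c2_bounds_of_ln (nn kp K c1 c2 : R) : 0 < nn -> 0 < kp -> 1 <= K ->
  c2 * nn * ln ((1 + 2 * K) / (2 * K)) >= c1 * nn ->
  c1 * nn >= kp / ln (1 + 1 / (8 * K)) ->
  8 * K * kp <= c1 * nn /\ 2 * K * c1 <= c2.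
Proof.
  intros Hnn Hkp HK H2 H1.
  replace ((1 + 2 * K) / (2 * K)) with (1 + 1 / (2 * K)) in H2 by (field; lra).
  destruct (ln_1plus_le (1 / (8 * K))) as [L1p L1le]; [apply Rdiv_lt_0_compat; lra|].
  destruct (ln_1plus_le (1 / (2 * K))) as [L2p L2le]; [apply Rdiv_lt_0_compat; lra|].
  set (L1 := ln (1 + 1 / (8 * K))) in *. set (L2 := ln (1 + 1 / (2 * K))) in *.
  assert (HL1 : 8 * K * L1 <= 1)
    by (apply Rmult_le_compat_l with (r := 8 * K) in L1le; [|lra];
        replace (8 * K * (1 / (8 * K))) with 1 in L1le by (field; lra); lra).
  assert (HL2 : 2 * K * L2 <= 1)
    by (apply Rmult_le_compat_l with (r := 2 * K) in L2le; [|lra];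
        replace (2 * K * (1 / (2 * K))) with 1 in L2le by (field; lra); lra).
  assert (Hc1 : 8 * K * kp <= c1 * nn).
  { assert (kp <= c1 * nn * L1); [|nra].
    replace kp with (kp / L1 * L1) at 1 by (field; lra).
    apply Rmult_le_compat_r; lra. }
  split; auto.
  assert (Hc1p : 0 < c1 * nn) by nra.
  apply Rmult_le_reg_r with nn; [lra|]. nra.
Qed.

Section Isolating.

Variables (zs : list Cx) (k : nat) (m : Cx) (r R : R).
Hypotheses (Hiso : isolating zs (fun i => (i < k)%nat) m r 1 R) (Hk : (k <= length zs)%nat).

Lemma isolating_near x : In x (firstn k zs) -> Cmod (Csub x m) < r.
Proof.
  intro Hx. apply (In_nth _ _ C0) in Hx. destruct Hx as (j & Hj & <-).
  rewrite length_firstn in Hj. rewrite nth_firstn. destruct (Nat.ltb_spec j k); [|lia].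
  destruct Hiso as [Hin _]. assert (Hjn : (j < length zs)%nat) by lia.
  pose proof (proj1 (Hin j Hjn) H). lra.
Qed.

Lemma isolating_far x : In x (skipn k zs) -> R * r <= Cmod (Csub x m).
Proof.
  intro Hx. apply (In_nth _ _ C0) in Hx. destruct Hx as (j & Hj & <-).
  rewrite length_skipn in Hj. rewrite nth_skipn.
  destruct Hiso as [Hin Hout]. assert (Hkj : (k + j < length zs)%nat) by lia.
  assert (~ Cmod (Csub (nth (k + j) zs C0) m) < 1 * r)
    by (intro Hlt; apply (proj2 (Hin (k + j)%nat Hkj)) in Hlt; lia).
  destruct (Rlt_le_dec (Cmod (Csub (nth (k + j) zs C0) m)) (R * r)) as [Hlt|Hge]; auto.
  exfalso. apply (Hout (k + j)%nat Hkj). split; lra.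
Qed.

End Isolating.

Section LemmaA1.

Variables (n k : nat) (K c1 c2 r : R).
Hypotheses (Hn : (2 <= n)%nat) (Hk : (k <= n)%nat) (HK : 1 <= K) (Hr : 0 < r).

Local Notation nn := (INR n).
Local Notation kp := (INR (Nat.max 1 k)).

Hypotheses (Hc1 : 8 * K * kp <= c1 * nn) (Hc12 : 2 * K * c1 <= c2).

Lemma parameter_bounds :
  2 <= nn /\ 1 <= kp /\ 0 <= INR k <= kp /\ 0 <= INR (n - k) <= nn /\ 0 < c1 /\ 16 <= c2 * nn.
Proof.
  assert (2 <= nn) by (replace 2 with (INR 2) by (simpl; ring); apply le_INR; auto).
  assert (1 <= kp) by (replace 1 with (INR 1) by reflexivity; apply le_INR; lia).
  assert (INR k <= kp) by (apply le_INR; lia).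
  assert (INR (n - k) <= nn) by (apply le_INR; lia).
  pose proof (pos_INR k). pose proof (pos_INR (n - k)).
  assert (0 < c1) by nra.
  repeat split; try lra. nra.
Qed.

Lemma excess_near_le s : 0 < s -> 0 <= excess (s / (2 * kp * s)) k <= 3 / 4.
Proof.
  intro Hs. destruct parameter_bounds as (Hnn & Hkp & Hkk & _).
  replace (s / (2 * kp * s)) with (1 / (2 * kp)) by (field; lra).
  replace (3 / 4) with (1 / 2 * (1 + 1 / 2)) by field.
  apply excess_le; [apply Rdiv_nonneg; lra| |lra].
  apply Rmult_le_reg_r with (2 * kp); [lra|].
  replace (INR k * (1 / (2 * kp)) * (2 * kp)) with (INR k) by (field; lra). lra.
Qed.

Local Notation R := (4 * c2 * kp * nn ^ 3 * r).
Local Notation rho := (c1 * nn * r).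
Local Notation r0 := (c2 * nn ^ 2 * r + r).
Local Notation R0 := (R - c2 * nn ^ 2 * r).

Lemma far_radius_gt0 : 0 < R.
Proof.
  destruct parameter_bounds as (Hnn & Hkp & _ & _ & _ & Hc2).
  replace R with (4 * (c2 * nn) * kp * (nn * nn * r)) by ring.
  repeat apply Rmult_lt_0_compat; nra.
Qed.

Lemma disk_radii_pos : 0 < r0 /\ 0 < R0.
Proof.
  destruct parameter_bounds as (Hnn & Hkp & _ & _ & _ & Hc2).
  assert (0 < c2 * nn * (nn * r)) by (apply Rmult_lt_0_compat; nra).
  split.
  - replace r0 with (c2 * nn * (nn * r) + r) by ring. lra.
  - replace R0 with (c2 * nn * (nn * r) * (4 * kp * nn - 1)) by ring.
    apply Rmult_lt_0_compat; nra.
Qed.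

Lemma disk_error_lt1 : excess (r0 / (2 * kp * r0)) k * excess (2 * kp * r0 / R0) (n - k) < 1.
Proof.
  destruct parameter_bounds as (Hnn & Hkp & Hkk & HNN & Hc1p & Hc2).
  destruct disk_radii_pos as [Hr0 HR0].
  destruct (excess_near_le r0 Hr0) as [D1lo D1hi].
  assert (Hratio : INR (n - k) * (2 * kp * r0 / R0) <= 3 / 5).
  { set (A := c2 * nn) in *.
    assert (HAn : 0 < A * nn) by nra. assert (0 < 4 * kp * nn - 1) by nra.
    assert (Hden : 0 < A * nn * (4 * kp * nn - 1)) by (apply Rmult_lt_0_compat; lra).
    replace (INR (n - k) * (2 * kp * r0 / R0))
      with (INR (n - k) * (2 * kp * (A * nn + 1)) / (A * nn * (4 * kp * nn - 1)))
      by (unfold A in *; field; repeat split; nra).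
    apply Rmult_le_reg_r with (A * nn * (4 * kp * nn - 1)); [lra|].
    unfold Rdiv. rewrite Rmult_assoc, Rinv_l, Rmult_1_r by lra.
    assert (INR (n - k) * (2 * kp * (A * nn + 1)) <= nn * (2 * kp * (A * nn + 1)))
      by (apply Rmult_le_compat_r; nra).
    assert (2 * A * kp * nn >= 10 * kp + 3 * A) by nra.
    nra. }
  destruct (excess_le (n - k) (2 * kp * r0 / R0) (3 / 5)) as [D2lo D2hi];
    [apply Rdiv_nonneg; nra|auto|lra|].
  nra.
Qed.

Lemma center_error_le : excess (r / (2 * kp * r)) k * excess (2 * kp * r / R) (n - k) <= 3 / 128.
Proof.
  destruct parameter_bounds as (Hnn & Hkp & Hkk & HNN & Hc1p & Hc2).
  destruct (excess_near_le r Hr) as [D1lo D1hi].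
  assert (Hratio : INR (n - k) * (2 * kp * r / R) <= 1 / 64).
  { set (X := 2 * (c2 * nn) * nn ^ 2).
    assert (HX : 64 * nn <= X) by (unfold X; assert (32 <= c2 * nn * nn) by nra; nra).
    replace (2 * kp * r / R) with (1 / X)
      by (unfold X; field; repeat split; try apply pow_nonzero; nra).
    apply Rmult_le_reg_r with X; [lra|].
    replace (INR (n - k) * (1 / X) * X) with (INR (n - k)) by (field; lra). lra. }
  destruct (excess_le (n - k) (2 * kp * r / R) (1 / 64)) as [D2lo D2hi];
    [apply Rdiv_nonneg; [nra|apply far_radius_gt0]|auto|lra|].
  nra.
Qed.

Lemma far_ratio_le : INR (n - k) * (rho / R) <= 1 / (16 * K).
Proof.
  destruct parameter_bounds as (Hnn & Hkp & Hkk & HNN & Hc1p & Hc2).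
  set (Y := 4 * c2 * kp * nn ^ 2).
  assert (HY : 16 * K * c1 * nn <= Y).
  { assert (2 * K * c1 * (kp * nn) <= c2 * (kp * nn)) by (apply Rmult_le_compat_r; nra).
    assert (2 * K * c1 * 2 <= 2 * K * c1 * (kp * nn)) by (apply Rmult_le_compat_l; nra).
    assert (4 * nn * (4 * K * c1) <= 4 * nn * (c2 * (kp * nn))) by (apply Rmult_le_compat_l; lra).
    unfold Y. lra. }
  assert (HY0 : 0 < Y) by nra.
  replace (INR (n - k) * (rho / R)) with (INR (n - k) * c1 / Y)
    by (unfold Y; field; repeat split; try apply pow_nonzero; nra).
  apply Rmult_le_reg_r with (16 * K * Y); [nra|].
  replace (INR (n - k) * c1 / Y * (16 * K * Y)) with (16 * K * (INR (n - k) * c1))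
    by (field; lra).
  replace (1 / (16 * K) * (16 * K * Y)) with Y by (field; lra).
  assert (INR (n - k) * c1 <= nn * c1) by (apply Rmult_le_compat_r; lra).
  nra.
Qed.

Lemma near_ratio_le : INR k * (r / rho) <= 1 / 8.
Proof.
  destruct parameter_bounds as (Hnn & Hkp & Hkk & HNN & Hc1p & Hc2).
  replace (r / rho) with (1 / (c1 * nn)) by (field; split; lra).
  apply Rmult_le_reg_r with (c1 * nn); [nra|].
  replace (INR k * (1 / (c1 * nn)) * (c1 * nn)) with (INR k) by (field; split; lra). nra.
Qed.

Lemma center_tail_lt :
  excess (rho / R) (n - k) * (1 + r / rho) ^ k
  / (1 - excess (r / (2 * kp * r)) k * excess (2 * kp * r / R) (n - k)) < 1 / (2 * K).
Proof.
  destruct parameter_bounds as (Hnn & Hkp & Hkk & HNN & Hc1p & Hc2).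
  pose proof center_error_le as Heps. pose proof far_radius_gt0 as HR.
  assert (Hrho : 0 < rho) by (repeat apply Rmult_lt_0_compat; lra).
  assert (Hx : 0 < 1 / (16 * K) <= 1 / 16)
    by (split; [apply Rdiv_lt_0_compat|apply Rmult_le_reg_r with (16 * K);
        [|field_simplify]]; lra).
  destruct (excess_le (n - k) (rho / R) (1 / (16 * K))) as [D3lo D3hi];
    [apply Rdiv_nonneg; lra|apply far_ratio_le|lra|].
  destruct (excess_le k (r / rho) (1 / 8)) as [D4lo D4hi];
    [apply Rdiv_nonneg; lra|apply near_ratio_le|lra|].
  unfold excess in D4lo, D4hi.
  set (D3 := excess (rho / R) (n - k)) in *. set (G := (1 + r / rho) ^ k) in *.
  set (eps := _ * _) in Heps |- *.
  apply Rmult_lt_reg_r with ((1 - eps) * (2 * K)); [nra|].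
  replace (D3 * G / (1 - eps) * ((1 - eps) * (2 * K))) with (2 * K * D3 * G) by (field; nra).
  replace (1 / (2 * K) * ((1 - eps) * (2 * K))) with (1 - eps) by (field; lra).
  assert (2 * K * D3 <= 17 / 128).
  { replace (17 / 128) with (2 * K * (1 / (16 * K) * (1 + 1 / 16))) by (field; lra).
    apply Rmult_le_compat_l; nra. }
  nra.
Qed.

Variables (F : cpoly) (zs : list Cx) (m : Cx).
Hypotheses (HF : length F = S n) (Hlead : nth n F C0 <> C0) (Hzs : length zs = n)
  (Hroots : roots_with_mult F zs)
  (Hnear : forall x, In x (firstn k zs) -> Cmod (Csub x m) < r)
  (Hfar : forall x, In x (skipn k zs) -> R <= Cmod (Csub x m)).

Lemma pderivn_k_neq0_in_disk z : Cmod (Csub z m) < c2 * nn ^ 2 * r -> peval (pderivn k F) z <> C0.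
Proof.
  intro Hz. destruct disk_radii_pos as [Hr0 HR0].
  apply (pderivn_neq0 F n zs HF Hroots k Hlead Hzs Hk z r0 R0 (2 * kp * r0)); auto.
  - destruct parameter_bounds as (_ & Hkp & _). nra.
  - intros x Hx. pose proof (Cmod_sub_le_via z x m). pose proof (Hnear x Hx). lra.
  - intros x Hx. pose proof (Cmod_sub_ge_via z x m). pose proof (Hfar x Hx). lra.
  - exact disk_error_lt1.
Qed.

Lemma taylor_tail_lt_at_center :
  sum_range (S k) n (fun i =>
      Cmod (Cdiv (Cmul (Cmul (peval (pderivn i F) m) (RtoC (rho ^ (i - k)))) (RtoC (INR (fact k))))
                 (Cmul (peval (pderivn k F) m) (RtoC (INR (fact i))))))
  < 1 / (2 * K).
Proof.
  destruct parameter_bounds as (Hnn & Hkp & _ & _ & Hc1p & _).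
  eapply Rle_lt_trans; [|exact center_tail_lt].
  apply (taylor_tail_le F n zs HF Hroots k Hlead Hzs Hk m r R (2 * kp * r)).
  - exact far_radius_gt0.
  - nra.
  - intros x Hx. rewrite Cmod_sub_sym. pose proof (Hnear x Hx). lra.
  - intros x Hx. rewrite Cmod_sub_sym. auto.
  - lra.
  - repeat apply Rmult_lt_0_compat; lra.
  - pose proof center_error_le. lra.
Qed.

End LemmaA1.

Theorem lemmaA1 (F : cpoly) (n : nat) (zs : list Cx) (k : nat) (K c1 c2 : R)
  (m : Cx) (r : R)
  (Hn : (2 <= n)%nat)
  (HF : has_degree F n)
  (Hzs_len : length zs = n)
  (Hroots : roots_with_mult F zs)
  (Hk : (k <= n)%nat)
  (HK : 1 <= K)
  (Hc2 : c2 * INR n * ln ((1 + 2 * K) / (2 * K)) >= c1 * INR n)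
  (Hc1 : c1 * INR n >= INR (Nat.max 1 k) / ln (1 + 1 / (8 * K)))
  (Hr : 0 < r)
  (Hiso : isolating zs (fun i => (i < k)%nat) m r 1
            (4 * c2 * INR (Nat.max 1 k) * INR n ^ 3)) :
  (forall z : Cx, Cmod (Csub z m) < c2 * INR n ^ 2 * r ->
      peval (pderivn k F) z <> C0) /\
  sum_range (S k) n (fun i =>
      Cmod (Cdiv (Cmul (Cmul (peval (pderivn i F) m)
                              (RtoC ((c1 * INR n * r) ^ (i - k))))
                        (RtoC (INR (fact k))))
                  (Cmul (peval (pderivn k F) m) (RtoC (INR (fact i))))))
  < 1 / (2 * K).
Proof.
  destruct HF as [HF_len Hlead].
  assert (Hnn : 0 < INR n) by (apply lt_0_INR; lia).
  assert (Hkp : 0 < INR (Nat.max 1 k)) by (apply lt_0_INR; lia).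
  destruct (c1_c2_bounds_of_ln _ _ K c1 c2 Hnn Hkp HK Hc2 Hc1) as [Hc1' Hc12].
  assert (Hkzs : (k <= length zs)%nat) by lia.
  pose proof (isolating_near zs k m r _ Hiso Hkzs) as Hnear.
  pose proof (isolating_far zs k m r _ Hiso Hkzs) as Hfar.
  split.
  - intro z. apply (pderivn_k_neq0_in_disk n k K c1 c2 r Hn Hk HK Hr Hc1' Hc12 F zs m); auto.
  - apply (taylor_tail_lt_at_center n k K c1 c2 r Hn Hk HK Hr Hc1' Hc12 F zs m); auto.
Qed.
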